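(* Let $H=(V,E)$ be a geometric hypergraph on points in the plane, i.e., $V$ is a finite set of points in $\mathbb{R}^2$ and $E$ is a family of subsets of $V$, where every edge $A\in E$ has $|A|\ge 2$. Then $H$ admits a separating cycle if and only if $H$ is $2$-colorable.
   Context: A hypergraph $H=(V,E)$ is $2$-colorable if there is a coloring of $V$ with two colors such that no edge $A\in E$ is monochromatic. For a simple closed polygonal curve $C$ in the plane, let $\mathring{C}$, $\partial C$, $\overline{C}$ denote its interior, boundary and exterior. A polygonal cycle $C$ is a separating cycle for $H$ if (i) $C$ is simple (no self-intersections) and (ii) for each edge $A\in E$, both $A\cap(\mathring{C}\cup\partial C)$ and $A\cap\overline{C}$ are nonempty. *)

From HB Require Import structures.
From mathcomp Require Import all_boot all_order all_algebra.
From mathcomp Require Import all_classical all_reals all_analysis.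
Import numFieldNormedType.Exports.
Set Implicit Arguments. Unset Strict Implicit. Unset Printing Implicit Defensive.
Import Order.TTheory GRing.Theory Num.Theory.
Local Open Scope classical_set_scope.
Local Open Scope ring_scope.

Section Plane.
Variable R : realType.
Notation point := (R * R)%type.

Definition segment (p q : point) : set point :=
  [set x | exists t : R, 0 <= t /\ t <= 1 /\
     x = ((1 - t) * p.1 + t * q.1, (1 - t) * p.2 + t * q.2)].

(* A polygonal cycle is given by its list of vertices p_0, ..., p_{k-1};
   its sides are [p_i, p_{i+1 mod k}]. *)
Definition side (ps : seq point) (i : nat) : set point :=
  segment (nth (0,0) ps i) (nth (0,0) ps ((i.+1) %% size ps)).

Definition pboundary (ps : seq point) : set point :=
  [set x | exists2 i, (i < size ps)%N & side ps i x].

Definition simple_polygon (ps : seq point) : Prop :=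
  (3 <= size ps)%N /\ uniq ps /\
  forall i j, (i < j)%N -> (j < size ps)%N ->
    if j == i.+1 then side ps i `&` side ps j = [set nth (0,0) ps j]
    else if (i == 0%N) && (j == (size ps).-1) then
      side ps i `&` side ps j = [set nth (0,0) ps i]
    else side ps i `&` side ps j = set0.

Definition bounded_set (S : set point) : Prop :=
  exists M : R, forall y, S y -> `|y.1| <= M /\ `|y.2| <= M.

(* exterior: the unbounded part of the complement of the boundary, i.e. the
   points lying in an unbounded connected subset of the complement *)
Definition pexterior (ps : seq point) : set point :=
  [set x | exists S : set point, S x /\ S `<=` ~` pboundary ps /\
     @connected (R * R)%type S /\ ~ bounded_set S].

Definition pinterior (ps : seq point) : set point :=
  ~` (pboundary ps `|` pexterior ps).

Definition separating_cycle (E : seq (seq point)) (ps : seq point) : Prop :=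
  simple_polygon ps /\
  forall A, A \in E ->
    (exists2 a, a \in A & (pinterior ps `|` pboundary ps) a) /\
    (exists2 a, a \in A & pexterior ps a).

Definition two_colorable (V : seq point) (E : seq (seq point)) : Prop :=
  exists c : point -> bool, forall A, A \in E ->
    exists x, exists y, [/\ x \in A, y \in A & c x != c y].

Definition geom_hypergraph (V : seq point) (E : seq (seq point)) : Prop :=
  uniq V /\ forall A, A \in E -> [/\ uniq A, {subset A <= V} & (2 <= size A)%N].
End Plane.

From mathcomp Require Import all_boot all_order all_algebra.
From mathcomp Require Import all_classical all_reals all_analysis.
From mathcomp Require Import ring lra zify.
Import numFieldNormedType.Exports.
Set Implicit Arguments. Unset Strict Implicit. Unset Printing Implicit Defensive.
Import Order.TTheory GRing.Theory Num.Theory.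
Local Open Scope classical_set_scope.
Local Open Scope ring_scope.

(* A separating cycle 2-colors the points: exterior points against the others,
   since the boundary and interior never meet the exterior.
   Conversely, color the points red and blue.  After a shear, the abscissa u
   separates the finitely many points, so distinct points have u-distance at
   least some d > 0.  Take a comb: a spine at a height M above all points, with
   a tooth of half-width d/3 dipping down to each red point in increasing u
   order, closed by vertical sides and a top edge at height M + 1.  Its lower
   chain is strictly u-monotone, which makes it a simple polygon; the red
   points are vertices, and a blue point escapes straight down, because every
   boundary point with the same abscissa lies above it (teeth are too narrow to
   reach its abscissa). *)

Section Segments.
Variable R : realType.
Local Notation point := (R * R)%type.

Lemma segment_l (a b : point) : segment a b a.
Proof. by exists 0; rewrite subr0 !mul1r !mul0r !addr0; case: a. Qed.

Lemma segment_r (a b : point) : segment a b b.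
Proof. by exists 1; rewrite subrr !mul0r !mul1r !add0r; case: b. Qed.

Lemma segment_sym (a b x : point) : segment a b x -> segment b a x.
Proof.
case=> t [t0 [t1 ->]]; exists (1 - t); split; first lra; split; first lra.
by congr pair; ring.
Qed.

Definition affine (f : point -> R) := forall (a b : point) t,
  f ((1 - t) * a.1 + t * b.1, (1 - t) * a.2 + t * b.2) = (1 - t) * f a + t * f b.

Lemma snd_affine : affine snd.
Proof. by []. Qed.

Variables (f : point -> R) (f_affine : affine f).

Lemma segment_affine_ge (c : R) (a b x : point) :
  segment a b x -> c <= f a -> c <= f b -> c <= f x.
Proof. by case=> t [t0 [t1 ->]] ca cb; rewrite f_affine; nra. Qed.

Lemma segment_affine_le (c : R) (a b x : point) :
  segment a b x -> f a <= c -> f b <= c -> f x <= c.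
Proof. by case=> t [t0 [t1 ->]] ac bc; rewrite f_affine; nra. Qed.

Lemma segment_affine_eq (a b x : point) : segment a b x -> f a = f b -> f x = f a.
Proof.
move=> sx ab; apply/le_anti/andP; split.
  by apply: segment_affine_le sx _ _; rewrite ?ab.
by apply: segment_affine_ge sx _ _; rewrite ?ab.
Qed.

Lemma segment_affine_l (a b x : point) :
  segment a b x -> f a < f b -> f x <= f a -> x = a.
Proof.
case=> t [t0 [t1 ->]]; rewrite f_affine => ab xa.
have -> : t = 0 by nra.
by rewrite subr0 !mul1r !mul0r !addr0; case: a {ab xa}.
Qed.

Lemma segment_affine_r (a b x : point) :
  segment a b x -> f a < f b -> f b <= f x -> x = b.
Proof.
case=> t [t0 [t1 ->]]; rewrite f_affine => ab bx.
have -> : t = 1 by nra.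
by rewrite subrr !mul0r !mul1r !add0r; case: b {ab bx}.
Qed.

End Segments.

Arguments snd_affine {R}.

Lemma cycle_nth (T : Type) (x0 : T) (e : rel T) (s : seq T) k :
  cycle e s -> (k < size s)%N -> e (nth x0 s k) (nth x0 s (k.+1 %% size s)).
Proof.
rewrite (cycle_path x0) => /(pathP x0) e_s kN.
have [k1N|sk] := ltnP k.+1 (size s); first by rewrite modn_small //; exact: e_s k.+1 k1N.
have sN : k.+1 = size s by apply/eqP; rewrite eqn_leq kN sk.
rewrite -sN modnn; have -> : k = (size s).-1 by rewrite -sN.
by rewrite nth_last; apply: e_s 0 _; rewrite -sN.
Qed.

Lemma setI_eq_set1 (T : Type) (A B : set T) p :
  A p -> B p -> (forall x, A x -> B x -> x = p) -> A `&` B = [set p].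
Proof. by move=> Ap Bp uniq_p; apply/seteqP; split=> x /= => [[/uniq_p]|->]. Qed.

Section Polygons.
Variable R : realType.
Local Notation point := (R * R)%type.
Implicit Types ps : seq point.

Lemma side_start ps i : side ps i (nth (0, 0) ps i).
Proof. exact: segment_l. Qed.

Lemma side_end ps i : (i.+1 < size ps)%N -> side ps i (nth (0, 0) ps i.+1).
Proof. by move=> iN; rewrite /side modn_small //; exact: segment_r. Qed.

Lemma mem_pboundary ps p : p \in ps -> pboundary ps p.
Proof. by case/(nthP (0, 0)) => k kN <-; exists k => //; exact: side_start. Qed.

Lemma pboundary_cycle (P : set point) (e : rel point) ps :
  cycle e ps -> (forall p q, e p q -> segment p q `<=` P) -> pboundary ps `<=` P.
Proof. by move=> e_ps segP x [k kN skx]; apply: segP (cycle_nth _ e_ps kN) _ skx. Qed.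

Lemma closure_not_pexterior ps x :
  (pinterior ps `|` pboundary ps) x -> ~ pexterior ps x.
Proof.
case=> [x_int x_ext|x_bd [S [Sx [S_bd _]]]]; first by apply: x_int; right.
exact: S_bd x Sx x_bd.
Qed.

End Polygons.

Section Shear.
Variables (R : realType) (lam : R).
Local Notation point := (R * R)%type.

Definition uc (p : point) : R := p.1 + lam * p.2.

Definition upt (a b : R) : point := (a - lam * b, b).

Lemma uc_upt a b : uc (upt a b) = a.
Proof. by rewrite /uc /= subrK. Qed.

Lemma uc_affine : affine uc.
Proof. by move=> a b t; rewrite /uc /=; ring. Qed.

Lemma connected_parabola_image (a b c d : R) :
  connected (range (fun s : R => (a + s * s * c, b + s * s * d))).
Proof.
have cont (a' c' : R) : continuous (fun s : R => a' + s * s * c').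
  move=> s; apply: (@cvgD _ R^o); first exact: cvg_cst.
  by apply: (@cvgM R); [apply: (@cvgM R); exact: cvg_id | exact: cvg_cst].
apply: connected_continuous_connected; first by apply/connected_intervalP.
apply: continuous_subspaceT => s.
have h : (fun s : R => (a + s * s * c, b + s * s * d)) @ s -->
    (a + s * s * c, b + s * s * d).
  by apply: (@cvg_pair R R R (nbhs s) (nbhs (a + s * s * c)) (nbhs (b + s * s * d)));
    exact: cont.
exact: h.
Qed.

(* The downward ray from [q] is the image of [s |-> s * s] on all of [R],
   which is connected. *)
Lemma pexterior_sheared_ray (ps : seq point) q :
  (forall x, pboundary ps x -> uc x = uc q -> q.2 < x.2) -> pexterior ps q.
Proof.
move=> below; set ray := fun s : R => (q.1 + s * s * lam, q.2 + s * s * (-1)).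
exists (range ray); split.
  by exists 0 => //; rewrite /ray !mul0r !addr0 -surjective_pairing.
split.
  move=> _ [s _ <-] /below; have -> : uc (ray s) = uc q by rewrite /uc /=; ring.
  have : 0 <= s * s by rewrite -expr2 sqr_ge0.
  by rewrite /ray /=; lra.
split; first exact: connected_parabola_image.
case=> B ray_bounded; set s := `|q.2| + `|B| + 1.
have [_ /=] := ray_bounded _ (ex_intro2 _ _ s I erefl).
have := ler_norm q.2; have := ler_norm B.
have : - (q.2 + s * s * -1) <= `|q.2 + s * s * -1| by rewrite -normrN ler_norm.
have s1 : 1 <= s by rewrite /s; have := normr_ge0 q.2; have := normr_ge0 B; lra.
have : s <= s * s by rewrite ler_pMr; lra.
rewrite /s; nra.
Qed.

End Shear.

Lemma exists_seq_ub (R : realType) (s : seq R) : exists M, {in s, forall x, x < M}.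
Proof.
elim: s => [|a s [M hM]]; first by exists 0.
exists (Num.max (a + 1) M) => x; rewrite inE => /predU1P[->|/hM xM].
  by rewrite lt_max ltrDl ltr01.
by rewrite lt_max xM orbT.
Qed.

Lemma exists_seq_pos_lb (R : realType) (s : seq R) :
  {in s, forall x, 0 < x} -> exists2 d, 0 < d & {in s, forall x, d <= x}.
Proof.
elim: s => [|a s IH] s_pos; first by exists 1.
have [|d d0 hd] := IH; first by move=> x xs; apply: s_pos; rewrite inE xs orbT.
exists (Num.min a d) => [|x]; first by rewrite lt_min s_pos ?mem_head.
by rewrite inE => /predU1P[->|/hd dx]; rewrite ge_min ?lexx // dx orbT.
Qed.

(* Any [lam] larger than every slope ratio [(q.1 - p.1) / (p.2 - q.2)] works. *)
Lemma exists_shear_injective (R : realType) (s : seq (R * R)) :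
  exists lam, {in s &, injective (uc lam)}.
Proof.
have [lam hlam] := exists_seq_ub [seq (q.1 - p.1) / (p.2 - q.2) | p <- s, q <- s].
exists lam => p q ps qs; rewrite /uc => upq.
have [e2|ne2] := eqVneq p.2 q.2.
  by move: upq; rewrite e2 => /addIr; case: p q {ps qs} e2 => p1 p2 [q1 q2] /= -> ->.
have : (q.1 - p.1) / (p.2 - q.2) < lam by apply/hlam/allpairsP; exists (p, q).
have -> : q.1 - p.1 = lam * (p.2 - q.2) by rewrite mulrBr; lra.
by rewrite mulfK ?ltxx // subr_eq0.
Qed.

Lemma exists_separation (R : realType) (T : eqType) (f : T -> R) (s : seq T) :
  {in s &, injective f} ->
  exists2 d, 0 < d & {in s &, forall p q, p != q -> d <= `|f p - f q|}.
Proof.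
move=> f_inj.
have [|d d0 hd] :=
  @exists_seq_pos_lb _ [seq `|f p - f q| | p <- s, q <- [seq q <- s | q != p]].
  move=> z /allpairsPdep[p [q [ps]]]; rewrite mem_filter => /andP[qp qs] ->.
  by rewrite normr_gt0 subr_eq0; apply: contra qp => /eqP/f_inj ->.
exists d => // p q ps qs pq; apply: hd; apply/allpairsPdep; exists p, q.
by rewrite mem_filter eq_sym pq.
Qed.

Lemma sorted_gap (R : realType) (T : eqType) (f : T -> R) d (s : seq T) :
  uniq s -> sorted (fun p q => f p <= f q) s ->
  {in s &, forall p q, p != q -> d <= `|f p - f q|} ->
  sorted (fun p q => f p + d <= f q) s.
Proof.
elim: s => [//|p [//|q s] IH] /andP[ps qs_uniq] /andP[pq qs_sorted] sep.
apply/andP; split.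
  have pq' : p != q by apply: contraNneq ps => ->; rewrite mem_head.
  have qs : q \in [:: p, q & s] by rewrite !inE eqxx orbT.
  have := sep p q (mem_head _ _) qs pq'.
  by rewrite distrC ger0_norm ?subr_ge0 // lerBrDl addrC.
by apply: IH => // x y xs ys; apply: sep; rewrite inE ?xs ?ys orbT.
Qed.

Section CappedChain.
Variables (R : realType) (lam : R).
Local Notation point := (R * R)%type.
Local Notation uc := (uc lam).
Local Notation upt := (upt lam).

Definition capped (ch : seq point) (T : R) : seq point :=
  ch ++ [:: upt (uc (last (0, 0) ch)) T; upt (uc (head (0, 0) ch)) T].

Lemma capped_cycle (e : rel point) ch T :
  let TR := upt (uc (last (0, 0) ch)) T in
  let TL := upt (uc (head (0, 0) ch)) T in
  sorted e ch -> e (last (0, 0) ch) TR -> e TR TL -> e TL (head (0, 0) ch) ->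
  cycle e (capped ch T).
Proof.
case: ch => [|p ch] /=; first by move=> _ _ ->.
move=> e_ch e_last e_top e_first.
by rewrite rcons_cat cat_path e_ch /= e_last e_top e_first.
Qed.

Lemma vertical_segment_facts (p x : point) T : p.2 < T ->
  segment p (upt (uc p) T) x -> uc x = uc p /\ (T <= x.2 -> x = upt (uc p) T).
Proof.
move=> pT sx; split; last by move=> Tx; apply: (segment_affine_r snd_affine sx).
by apply: (segment_affine_eq (uc_affine lam) sx); rewrite uc_upt.
Qed.

Let uc_lt_trans : transitive (fun p q : point => uc p < uc q).
Proof. by move=> q p r; apply: lt_trans. Qed.

Variables (ch : seq point) (M T : R).
Local Notation N := (size ch).
Local Notation c k := (nth (0, 0) ch k).
Local Notation ps := (capped ch T).
Local Notation TR := (upt (uc (c N.-1)) T).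
Local Notation TL := (upt (uc (c 0)) T).

Lemma size_capped : size ps = N.+2.
Proof. by rewrite size_cat addn2. Qed.

Lemma nth_capped_chain k : (k < N)%N -> nth (0, 0) ps k = c k.
Proof. by move=> kN; rewrite nth_cat kN. Qed.

Lemma nth_capped_right : nth (0, 0) ps N = TR.
Proof. by rewrite nth_cat ltnn subnn nth_last. Qed.

Lemma nth_capped_left : nth (0, 0) ps N.+1 = TL.
Proof. by rewrite nth_cat ltnNge leqnSn subSnn nth0. Qed.

Lemma side_capped_chain k : (k.+1 < N)%N -> side ps k = segment (c k) (c k.+1).
Proof.
by move=> kN; rewrite /side size_capped modn_small ?nth_capped_chain //; lia.
Qed.

Lemma side_capped_right : (0 < N)%N -> side ps N.-1 = segment (c N.-1) TR.
Proof.
move=> N0; rewrite /side size_capped prednK // modn_small //.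
by rewrite nth_capped_right nth_capped_chain ?prednK.
Qed.

Lemma side_capped_top : side ps N = segment TR TL.
Proof. by rewrite /side size_capped modn_small // nth_capped_right nth_capped_left. Qed.

Lemma side_capped_left : (0 < N)%N -> side ps N.+1 = segment TL (c 0).
Proof. by move=> N0; rewrite /side size_capped modnn nth_capped_left nth_capped_chain. Qed.

Hypothesis ch_size : (2 <= N)%N.
Hypothesis ch_sorted : sorted (fun p q => uc p < uc q) ch.
Hypothesis ch_low : {in ch, forall p, p.2 <= M}.
Hypothesis MT : M < T.

Lemma uc_chain_lt i j : (i < j)%N -> (j < N)%N -> uc (c i) < uc (c j).
Proof. by move=> ij jN; apply: (sorted_ltn_nth uc_lt_trans) => //; rewrite inE; lia. Qed.

Lemma chain_low k : (k < N)%N -> (c k).2 <= M.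
Proof. by move=> kN; apply/ch_low/mem_nth. Qed.

Lemma chain_side_facts k x : (k.+1 < N)%N -> side ps k x ->
  [/\ uc (c k) <= uc x <= uc (c k.+1), x.2 <= M,
      uc x <= uc (c k) -> x = c k & uc (c k.+1) <= uc x -> x = c k.+1].
Proof.
move=> kN; rewrite side_capped_chain // => sx.
have ck_lt := uc_chain_lt (ltnSn k) kN.
split.
- apply/andP; split.
    by apply: (segment_affine_ge (uc_affine lam) sx) => //; apply: ltW.
  by apply: (segment_affine_le (uc_affine lam) sx) => //; apply: ltW.
- by apply: (segment_affine_le snd_affine sx); apply: chain_low; lia.
- exact: (segment_affine_l (uc_affine lam) sx ck_lt).
- exact: (segment_affine_r (uc_affine lam) sx ck_lt).
Qed.

Lemma right_side_facts x : side ps N.-1 x ->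
  uc x = uc (c N.-1) /\ (T <= x.2 -> x = TR).
Proof.
rewrite side_capped_right; last lia.
by apply: vertical_segment_facts; apply: le_lt_trans MT; apply: chain_low; lia.
Qed.

Lemma left_side_facts x : side ps N.+1 x ->
  uc x = uc (c 0) /\ (T <= x.2 -> x = TL).
Proof.
rewrite side_capped_left; last lia.
move=> /segment_sym; apply: vertical_segment_facts.
by apply: le_lt_trans MT; apply: chain_low; lia.
Qed.

Lemma top_side_height x : side ps N x -> x.2 = T.
Proof. by rewrite side_capped_top => sx; exact: (segment_affine_eq snd_affine sx). Qed.

Lemma capped_uniq : uniq ps.
Proof.
have high_notin p : p.2 = T -> p \notin ch.
  by move=> pT; apply/negP => /ch_low; rewrite pT => /(lt_le_trans MT); rewrite ltxx.
rewrite cat_uniq; apply/and3P; split.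
- by apply: (sorted_uniq uc_lt_trans) ch_sorted => p; rewrite /= ltxx.
- by apply/hasPn => p; rewrite !inE => /orP[]/eqP->; apply: high_notin.
- rewrite /= inE andbT -nth_last -nth0; apply/eqP => /(congr1 uc).
  rewrite !uc_upt => e; have : uc (c 0) < uc (c N.-1) by apply: uc_chain_lt; lia.
  by rewrite e ltxx.
Qed.

Lemma capped_adjacent_sides i : (i.+1 < N.+2)%N ->
  side ps i `&` side ps i.+1 = [set nth (0, 0) ps i.+1].
Proof.
move=> iN; apply: setI_eq_set1; first by apply: side_end; rewrite size_capped.
  exact: side_start.
move=> x; have [i2N|[i2N|[i1N|->]]] : (i.+2 < N \/ i.+2 = N \/ i.+1 = N \/ i = N)%N by lia.
- move=> /(chain_side_facts (ltnW i2N)) [_ _ _ xr].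
  move=> /(chain_side_facts i2N) [/andP[ux _] _ _ _].
  by rewrite nth_capped_chain; [exact: xr | exact: ltnW].
- have i1N : (i.+1 < N)%N by lia.
  have i1 : i.+1 = N.-1 by lia.
  move=> /(chain_side_facts i1N) [_ _ _ xr].
  rewrite {1}i1 => /right_side_facts [ux _].
  by rewrite nth_capped_chain //; apply: xr; rewrite ux i1.
- have i1 : i = N.-1 by lia.
  rewrite {1}i1 i1N => /right_side_facts [_ xTR] /top_side_height xT.
  by rewrite nth_capped_right xTR ?xT.
- move=> /top_side_height xT /left_side_facts [_ xTL].
  by rewrite nth_capped_left xTL ?xT.
Qed.

Lemma capped_closing_sides : side ps 0 `&` side ps N.+1 = [set nth (0, 0) ps 0].
Proof.
have N0 : (0 < N)%N by lia.
apply: setI_eq_set1; first exact: side_start.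
  by rewrite side_capped_left // nth_capped_chain //; exact: segment_r.
move=> x /(chain_side_facts ch_size) [_ _ x0 _] /left_side_facts [ux _].
by rewrite nth_capped_chain //; apply: x0; rewrite ux.
Qed.

Lemma capped_disjoint_sides i j : (i.+1 < j)%N -> (j < N.+2)%N ->
  ~~ ((i == 0%N) && (j == N.+1)) -> side ps i `&` side ps j = set0.
Proof.
move=> ij jN not_closing; apply/seteqP; split=> x // [xi xj].
have [j1N|[j1N|[jN'|jN']]] : (j.+1 < N \/ j.+1 = N \/ j = N \/ j = N.+1)%N by lia.
- have [/andP[_ xu] _ _ _] := chain_side_facts (ltn_trans ij (ltnW j1N)) xi.
  have [/andP[ux _] _ _ _] := chain_side_facts j1N xj.
  by have := uc_chain_lt ij (ltnW j1N); lra.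
- have i1N : (i.+1 < N)%N by lia.
  have [/andP[_ xu] _ _ _] := chain_side_facts i1N xi.
  have jN1 : j = N.-1 by lia.
  move: xj; rewrite jN1 => /right_side_facts [ux _].
  have : uc (c i.+1) < uc (c N.-1) by apply: uc_chain_lt; lia.
  lra.
- have i1N : (i.+1 < N)%N by lia.
  have [_ xM _ _] := chain_side_facts i1N xi.
  move: xj; rewrite jN' => /top_side_height xT.
  by move: (le_lt_trans xM MT); rewrite xT ltxx.
- have i0 : (0 < i)%N by move: not_closing; rewrite jN' eqxx andbT lt0n.
  move: xj; rewrite {}jN' => /left_side_facts [ux _].
  have [i1N|iN1] : (i.+1 < N \/ i = N.-1)%N by lia.
    have [/andP[ui _] _ _ _] := chain_side_facts i1N xi.
    by have := uc_chain_lt i0 (ltnW i1N); lra.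
  move: xi; rewrite iN1 => /right_side_facts [ui _].
  have : uc (c 0) < uc (c N.-1) by apply: uc_chain_lt; lia.
  lra.
Qed.

Lemma capped_simple : simple_polygon ps.
Proof.
split; first by rewrite size_capped; lia.
split; first exact: capped_uniq.
move=> i j ij; rewrite size_capped /= => jN.
case: eqP => [ji|ji]; first by subst j; exact: capped_adjacent_sides.
case: ifP => [/andP[/eqP-> /eqP->]|not_closing]; first exact: capped_closing_sides.
by apply: capped_disjoint_sides => //; [lia | rewrite not_closing].
Qed.

End CappedChain.

Section Comb.
Variables (R : realType) (lam eps M : R).
Local Notation point := (R * R)%type.
Local Notation uc := (uc lam).
Local Notation upt := (upt lam).

Fixpoint comb (rs : seq point) : seq point :=
  if rs is r :: rs' then [:: upt (uc r - eps) M, r, upt (uc r + eps) M & comb rs']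
  else [::].

Lemma mem_comb rs : {subset rs <= comb rs}.
Proof.
elim: rs => [//|r rs IH] p; rewrite inE => /predU1P[->|/IH prs].
  by rewrite /= !inE eqxx orbT.
by rewrite /= !inE prs !orbT.
Qed.

Lemma comb_low rs : {in rs, forall r, r.2 <= M} -> {in comb rs, forall p, p.2 <= M}.
Proof.
elim: rs => [//|r rs IH] rs_low p.
have /IH rs_comb_low : {in rs, forall r, r.2 <= M}.
  by move=> r' r'rs; apply: rs_low; rewrite inE r'rs orbT.
rewrite /= !inE; case/or4P=> [/eqP->|/eqP->|/eqP->|/rs_comb_low //] /=.
- exact: lexx.
- exact: rs_low (mem_head _ _).
- exact: lexx.
Qed.

Lemma last_comb r rs : last (0, 0) (comb (r :: rs)) = upt (uc (last r rs) + eps) M.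
Proof. by elim: rs r => [//|r' rs IH] r; rewrite -IH. Qed.

Lemma comb_sorted (e : rel point) rs :
  {in rs, forall r, e (upt (uc r - eps) M) r && e r (upt (uc r + eps) M)} ->
  sorted (fun r r' => e (upt (uc r + eps) M) (upt (uc r' - eps) M)) rs ->
  sorted e (comb rs).
Proof.
elim: rs => [//|r rs IH] teeth e_rs.
have /andP[e_lo e_hi] := teeth r (mem_head _ _).
have {IH} : sorted e (comb rs).
  apply: IH; last exact: path_sorted e_rs.
  by move=> r' r'rs; apply: teeth; rewrite inE r'rs orbT.
rewrite /= e_lo e_hi.
by case: rs {teeth} e_rs => [//|r' rs] /= /andP[-> _].
Qed.

Lemma capped_comb_simple r rs T : 0 < eps -> M < T ->
  sorted (fun p q => uc p + 3 * eps <= uc q) (r :: rs) ->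
  {in r :: rs, forall p, p.2 <= M} ->
  simple_polygon (capped lam (comb (r :: rs)) T).
Proof.
move=> eps0 MT gap low; apply: (capped_simple (M := M)) => //; last exact: comb_low.
apply: comb_sorted => [p _|]; first by apply/andP; split; rewrite uc_upt; lra.
by apply: sub_sorted gap => p q /=; rewrite !uc_upt; lra.
Qed.

(* Consecutive vertices of the capped comb are either both at height at least
   [M] or both within [eps] of the same tooth, and both properties pass to the
   segment between them. *)
Lemma pboundary_capped_comb r rs T x : 0 <= eps -> M <= T ->
  pboundary (capped lam (comb (r :: rs)) T) x ->
  M <= x.2 \/ exists2 r', r' \in r :: rs & uc r' - eps <= uc x <= uc r' + eps.
Proof.
move=> eps0 MT; move: x.
pose near r' p := (uc r' - eps <= uc p) && (uc p <= uc r' + eps).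
pose e p q := (M <= p.2) && (M <= q.2) || has (fun r' => near r' p && near r' q) (r :: rs).
apply: (@pboundary_cycle _ _ e).
  apply: capped_cycle; [|by rewrite ?last_comb /e /= ?lexx ?MT..].
  apply: comb_sorted; last by apply/(sortedP (0, 0)) => i _; rewrite /e /= !lexx.
  move=> r' r'rs; apply/andP; split; apply/orP; right; apply/hasP; exists r' => //;
    rewrite /near !uc_upt; apply/andP; split; apply/andP; split; lra.
move=> p q /orP[/andP[pM qM]|/hasP[r' r'rs /andP[/andP[pl pr] /andP[ql qr]]]] y spq.
  by left; exact: (segment_affine_ge snd_affine spq pM qM).
right; exists r' => //; apply/andP; split.
  exact: (segment_affine_ge (uc_affine lam) spq pl ql).
exact: (segment_affine_le (uc_affine lam) spq pr qr).
Qed.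

Lemma pexterior_capped_comb r rs T q : 0 <= eps -> M <= T -> q.2 < M ->
  {in r :: rs, forall r', uc q < uc r' - eps \/ uc r' + eps < uc q} ->
  pexterior (capped lam (comb (r :: rs)) T) q.
Proof.
move=> eps0 MT qM far; apply: (pexterior_sheared_ray (lam := lam)) => x.
case/(pboundary_capped_comb eps0 MT) => [xM _|[r' r'rs /andP[lo hi]] ux]; first lra.
by have := far r' r'rs; rewrite -ux; lra.
Qed.

End Comb.

Lemma exists_polygon_through_avoiding (R : realType) (reds blues : seq (R * R)) :
  reds != [::] -> {in reds, forall p, p \notin blues} ->
  exists ps, [/\ simple_polygon ps, {in reds, forall p, pboundary ps p}
               & {in blues, forall q, pexterior ps q}].
Proof.
move=> reds0 disj; have [p0 p0reds] : exists p, p \in reds.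
  by case: reds reds0 {disj} => // p reds _; exists p; rewrite mem_head.
set pts := reds ++ blues.
have [lam lam_inj] := exists_shear_injective pts.
have [d d0 sep] := exists_separation lam_inj.
have [M M_ub] := exists_seq_ub [seq p.2 | p <- pts].
have pts_low p : p \in pts -> p.2 < M by move=> ppts; apply/M_ub/map_f.
pose eps := d / 3.
have eps0 : 0 < eps by rewrite divr_gt0.
have d3 : d = 3 * eps by rewrite /eps mulrC divfK ?pnatr_eq0.
pose rs := sort (fun p q => uc lam p <= uc lam q) (undup reds).
have mem_rs p : (p \in rs) = (p \in reds) by rewrite mem_sort mem_undup.
case rs_eq : rs => [|r rs']; first by move: p0reds; rewrite -mem_rs rs_eq.
have rs_reds p : p \in r :: rs' -> p \in reds by rewrite -rs_eq mem_rs.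
have rs_pts p : p \in r :: rs' -> p \in pts by move=> /rs_reds; rewrite mem_cat => ->.
exists (capped lam (comb lam eps M (r :: rs')) (M + 1)); split.
- apply: capped_comb_simple => //; first by rewrite ltrDl.
    rewrite -rs_eq -d3; apply: sorted_gap.
    + by rewrite sort_uniq undup_uniq.
    + by apply: sort_sorted => p q; exact: le_total.
    + by move=> p q prs qrs; apply: sep; apply: rs_pts; rewrite -rs_eq.
  by move=> p /rs_pts /pts_low /ltW.
- move=> p preds; apply/mem_pboundary; rewrite mem_cat mem_comb //.
  by rewrite -rs_eq mem_rs.
- move=> q qblues; have qpts : q \in pts by rewrite mem_cat qblues orbT.
  apply: pexterior_capped_comb; rewrite ?pts_low ?lerDl ?ltW //.
  move=> r' r'rs; have qr' : q != r'.
    by apply: contraTneq qblues => ->; apply/disj/rs_reds.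
  have := sep q r' qpts (rs_pts _ r'rs) qr'; rewrite d3 ler_normr.
  by case/orP=> h; [right | left]; lra.
Qed.

Lemma exists_separating_polygon (R : realType) (reds blues : seq (R * R)) :
  {in reds, forall p, p \notin blues} ->
  exists ps, [/\ simple_polygon ps, {in reds, forall p, pboundary ps p}
               & {in blues, forall q, pexterior ps q}].
Proof.
case: reds => [_|r reds disj]; last exact: exists_polygon_through_avoiding.
(* Without red points, a dummy one above all blue points will do. *)
have [M M_ub] := exists_seq_ub [seq q.2 | q <- blues].
have [//||ps [ps_simple _ blues_ext]] :=
  @exists_polygon_through_avoiding _ [:: (0, M)] blues.
  by move=> _ /predU1P[->|//]; apply/negP => /(map_f snd) /M_ub; rewrite ltxx.
by exists ps.
Qed.

Lemma separating_cycle_two_colorable (R : realType) (V : seq (R * R)) E ps :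
  separating_cycle E ps -> two_colorable V E.
Proof.
case=> _ sep; exists (fun x => `[< pexterior ps x >]).
move=> A /sep [[a aA a_in] [b bA b_ext]].
exists b, a; split=> //.
by rewrite (asboolT b_ext) (asboolF (closure_not_pexterior a_in)).
Qed.

Lemma two_colorable_separating_cycle (R : realType) (V : seq (R * R)) E :
  two_colorable V E -> exists ps, separating_cycle E ps.
Proof.
case=> c c_bichromatic.
have [|ps [ps_simple reds_bd blues_ext]] :=
  exists_separating_polygon (reds := [seq p <- flatten E | c p])
    (blues := [seq p <- flatten E | ~~ c p]).
  by move=> p; rewrite !mem_filter => /andP[-> _].
exists ps; split=> // A AE.
have in_flatten z : z \in A -> z \in flatten E by move=> zA; apply/flattenP; exists A.
have [x [y [xA yA cxy]]] := c_bichromatic A AE.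
wlog cx : x y xA yA cxy / c x.
  move=> wl; case cx : (c x); first exact: (wl x y).
  by apply: (wl y x) => //; [rewrite eq_sym | move: cxy; rewrite cx; case: (c y)].
have ncy : ~~ c y by move: cxy; rewrite cx; case: (c y).
split; [exists x => //; right; apply: reds_bd | exists y => //; apply: blues_ext];
  by rewrite mem_filter ?cx ?ncy in_flatten.
Qed.

(* Neither direction needs the hypergraph assumptions. *)
Theorem theorem1 (R : realType) (V : seq (R * R)) (E : seq (seq (R * R))) :
  geom_hypergraph V E ->
  ((exists ps : seq (R * R), separating_cycle E ps) <-> two_colorable V E).
Proof.
move=> _; split; first by case=> ps /separating_cycle_two_colorable.
exact: two_colorable_separating_cycle.
Qed.
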